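(* Let $G$ be a graph and let $H = K_1 + G$ be the join of a single new node with $G$. If $H$ is an eulerian graph whose number of edges $q$ satisfies $q \equiv 1$ or $2 \pmod 4$, then $G$ is non-supergraceful.
   Context: Graphs are finite, simple. An eulerian graph is a connected graph all of whose nodes have even degree. For a graph $G$ with $p$ nodes and $q$ edges, a total labeling is a map $\varphi: V(G) \to \{1,\dots,p+q\}$ such that the $p$ node labels and the $q$ edge labels $|\varphi(u)-\varphi(v)|$, $uv \in E(G)$, are all pairwise distinct, so that together they form exactly $\{1,\dots,p+q\}$. $G$ is supergraceful if it admits a total labeling, and non-supergraceful otherwise. *)

From mathcomp Require Import all_boot.
Set Implicit Arguments. Unset Strict Implicit. Unset Printing Implicit Defensive.

(* A finite simple graph: vertex type V : finType with an adjacency relation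
   e : rel V that is symmetric and irreflexive (assumed as hypotheses). *)

Definition edges (V : finType) (e : rel V) : {set {set V}} :=
  [set E : {set V} | [exists x, exists y, e x y && (E == [set x; y])]].

Definition nverts (V : finType) : nat := #|V|.
Definition nedges (V : finType) (e : rel V) : nat := #|edges e|.

Definition deg (V : finType) (e : rel V) (x : V) : nat := #|[set y | e x y]|.

Definition connected_graph (V : finType) (e : rel V) : Prop :=
  forall x y : V, connect e x y.

Definition eulerian (V : finType) (e : rel V) : Prop :=
  connected_graph e /\ forall x : V, ~~ odd (deg e x).

Definition natdist (m n : nat) : nat := (m - n) + (n - m).

Definition joinK1 (V : finType) (e : rel V) : rel (option V) :=
  fun a b => match a, b with
             | Some x, Some y => e x y
             | None, Some _ | Some _, None => true
             | None, None => false
             end.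

(* total labeling: node labels in {1..p+q}; node labels and edge labels
   |phi u - phi v| all pairwise distinct and in {1..p+q} (hence, since there
   are p+q of them, they form exactly {1..p+q}). *)
Definition total_labeling (V : finType) (e : rel V) (phi : V -> nat) : Prop :=
  let N := nverts V + nedges e in
  [/\ forall x, 1 <= phi x <= N,
      forall x y, e x y -> 1 <= natdist (phi x) (phi y) <= N,
      injective phi,
      forall x y x' y', e x y -> e x' y' -> [set x; y] != [set x'; y'] ->
        natdist (phi x) (phi y) != natdist (phi x') (phi y')
    & forall x y z, e x y -> natdist (phi x) (phi y) != phi z].

Definition supergraceful (V : finType) (e : rel V) : Prop :=
  exists phi : V -> nat, total_labeling e phi.

From mathcomp Require Import all_boot zify.

Set Implicit Arguments.
Unset Strict Implicit.
Unset Printing Implicit Defensive.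

(* Since the new node is adjacent to every node of G, H has p + q edges and
   every node of G has odd degree. A total labeling of G uses each of
   1, ..., p + q exactly once, so its labels add up to C(p + q + 1, 2).
   Modulo 2 an edge label |a - b| counts as a + b, so the sum of all labels
   is congruent to the sum over the nodes of (deg x + 1) * label x, which is
   even. But C(n + 1, 2) is odd exactly when n = 1, 2 (mod 4). *)

Lemma big_option (R : Type) (idx : R) (op : R -> R -> R) (T : finType)
    (F : option T -> R) :
  \big[op/idx]_(a : option T) F a = op (F None) (\big[op/idx]_(x : T) F (Some x)).
Proof. by rewrite /index_enum {1}Finite.enum.unlock /= big_cons big_map. Qed.

Lemma odd_bin2 n : odd 'C(n, 2) = (n %% 4 == 2) || (n %% 4 == 3).
Proof. by rewrite bin2; have := odd_double_half (n * n.-1); have := divn_eq n 4; nia. Qed.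

Lemma odd_natdist m n : odd (natdist m n) = odd (m + n).
Proof.
rewrite /natdist; case: (leqP m n) => [le_mn | /ltnW le_nm].
- by rewrite (eqP le_mn) add0n oddB // addnC oddD.
- by rewrite (eqP le_nm) addn0 oddB // oddD.
Qed.

Section OrientedEdges.
Variables (T : finType) (r : rel T).
Hypotheses (r_sym : symmetric r) (r_irr : irreflexive r).

(* Each edge {x, y} is represented once, by the arc going up in enum_rank. *)
Definition oriented_edges : {set T * T} :=
  [set u | r u.1 u.2 && (enum_rank u.1 < enum_rank u.2)].

Lemma adj_enum_rank_neq x y : r x y -> enum_rank x != enum_rank y.
Proof. by move=> rxy; apply: contraTneq rxy => /enum_rank_inj->; rewrite r_irr. Qed.

Lemma oriented_edges_inj :
  {in oriented_edges &, injective (fun u : T * T => [set u.1; u.2])}.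
Proof.
move=> [a b] [c d]; rewrite !inE /= => /andP[rab lt_ab] /andP[rcd lt_cd] E.
have : a \in [set c; d] by rewrite -E set21.
have : b \in [set c; d] by rewrite -E set22.
rewrite !inE => /orP[/eqP eb|/eqP eb] /orP[/eqP ea|/eqP ea]; subst.
all: first [ by rewrite r_irr in rab | by rewrite r_irr in rcd | by [] | lia ].
Qed.

Lemma card_oriented_edges : #|oriented_edges| = nedges r.
Proof.
rewrite /nedges -(card_in_imset oriented_edges_inj).
apply: eq_card => E; rewrite [in RHS]inE; apply/imsetP/existsP.
  case=> [[x y]]; rewrite inE /= => /andP[rxy _] ->.
  by exists x; apply/existsP; exists y; rewrite rxy eqxx.
case=> x /existsP [y /andP [rxy /eqP ->]].
move: (adj_enum_rank_neq rxy); rewrite neq_ltn => /orP[lt_xy | lt_yx].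
  by exists (x, y); rewrite // inE /= rxy lt_xy.
by exists (y, x); [rewrite inE /= r_sym rxy lt_yx | rewrite /= setUC].
Qed.

Lemma sum_arcs_oriented_edges (F : T -> nat) :
  \sum_(u | r u.1 u.2) F u.1 = \sum_(u in oriented_edges) (F u.1 + F u.2).
Proof.
rewrite (bigID (fun u : T * T => enum_rank u.1 < enum_rank u.2)) /= big_split /=.
congr (_ + _); first by apply: eq_bigl => u; rewrite inE.
rewrite (reindex_inj (h := fun u : T * T => (u.2, u.1))); last by move=> [a b] [c d] [-> ->].
apply: eq_bigl => [[a b]] /=; rewrite inE /= r_sym.
case rab: (r a b) => //=; move: (adj_enum_rank_neq rab); rewrite neq_ltn.
by case/orP => lt_ab; [rewrite -leqNgt ltnW | rewrite lt_ab ltnNge ltnW].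
Qed.

Lemma sum_arcs_deg (F : T -> nat) :
  \sum_(u | r u.1 u.2) F u.1 = \sum_x deg r x * F x.
Proof.
rewrite -(pair_big_dep xpredT r (fun x _ => F x)) /=.
by apply: eq_bigr => x _; rewrite sum_nat_const; congr (_ * _); apply: eq_card => y; rewrite inE.
Qed.

Lemma handshake : \sum_x deg r x = 2 * nedges r.
Proof.
have := sum_arcs_oriented_edges (fun _ => 1); rewrite (sum_arcs_deg (fun _ => 1)) /=.
under eq_bigr do rewrite muln1.
by rewrite sum_nat_const card_oriented_edges mulnC => ->.
Qed.

Definition edge_label (phi : T -> nat) (u : T * T) : nat := natdist (phi u.1) (phi u.2).

Lemma total_labeling_perm_iota phi : total_labeling r phi ->
  perm_eq ([seq phi x | x <- enum T] ++ [seq edge_label phi u | u <- enum oriented_edges])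
          (iota 1 (nverts T + nedges r)).
Proof.
move=> [node_range edge_range phi_inj edge_labels_neq edge_node_neq].
set labels := _ ++ _.
have uniq_labels : uniq labels.
  rewrite cat_uniq map_inj_uniq ?enum_uniq //; apply/and3P; split => //.
    apply/hasPn => _ /mapP [u + ->]; rewrite mem_enum inE => /andP[ru _].
    by apply/mapP => -[z _]; apply/eqP/edge_node_neq.
  rewrite map_inj_in_uniq ?enum_uniq // => u v; rewrite !mem_enum => Eu Ev.
  apply: contra_eq => neq_uv.
  have neq_edges : [set u.1; u.2] != [set v.1; v.2].
    by apply: contra neq_uv => /eqP/(oriented_edges_inj Eu Ev)->.
  move: Eu Ev; rewrite !inE => /andP[ru _] /andP[rv _].
  exact: edge_labels_neq.
have labels_range : {subset labels <= iota 1 (nverts T + nedges r)}.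
  move=> l; rewrite mem_cat mem_iota => /orP[] /mapP [u Eu ->].
    by have := node_range u; lia.
  move: Eu; rewrite mem_enum inE => /andP[ru _].
  by have := edge_range _ _ ru; rewrite /edge_label; lia.
apply: uniq_perm; rewrite ?iota_uniq //.
apply: (uniq_min_size uniq_labels labels_range _).2.
rewrite size_iota size_cat !size_map -!cardE card_oriented_edges.
by rewrite /nverts cardT enumT.
Qed.

Lemma total_labeling_sum phi : total_labeling r phi ->
  \sum_x phi x + \sum_(u in oriented_edges) edge_label phi u
    = 'C((nverts T + nedges r).+1, 2).
Proof.
move=> /total_labeling_perm_iota labels_perm.
rewrite -bin2_sum big_ltn // add0n /index_iota subSS subn0 -(perm_big _ labels_perm).
by rewrite big_cat !big_map !big_enum.
Qed.

Lemma even_label_sum phi : (forall x, odd (deg r x)) ->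
  ~~ odd (\sum_x phi x + \sum_(u in oriented_edges) edge_label phi u).
Proof.
move=> odd_deg.
have odd_edge_sum : odd (\sum_(u in oriented_edges) edge_label phi u)
                  = odd (\sum_x deg r x * phi x).
  rewrite -sum_arcs_deg sum_arcs_oriented_edges.
  apply: (big_ind2 (fun a b => odd a = odd b)) => // [a b c d eq_ac eq_bd | u _].
  - by rewrite !oddD eq_ac eq_bd.
  - exact: odd_natdist.
rewrite oddD odd_edge_sum -oddD -big_split /=.
apply: (big_ind (fun s => ~~ odd s)) => // [a b | x _].
- by rewrite oddD => /negPf-> /negPf->.
- by rewrite -mulSn oddM /= odd_deg.
Qed.

End OrientedEdges.

Section JoinK1.
Variables (V : finType) (e : rel V).
Hypotheses (e_sym : symmetric e) (e_irr : irreflexive e).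

Lemma joinK1_sym : symmetric (joinK1 e).
Proof. by case=> [x|] [y|] //=; rewrite e_sym. Qed.

Lemma joinK1_irr : irreflexive (joinK1 e).
Proof. by case=> [x|] //=; rewrite e_irr. Qed.

Lemma deg_joinK1_None : deg (joinK1 e) None = #|V|.
Proof.
rewrite /deg -[#|V|]/(#|V|.+1.-1) -card_option -(cardsC1 None).
by apply: eq_card => -[x|]; rewrite !inE.
Qed.

Lemma deg_joinK1_Some x : deg (joinK1 e) (Some x) = (deg e x).+1.
Proof.
rewrite /deg.
have -> : [set b | joinK1 e (Some x) b] = None |: (Some @: [set y | e x y]).
  apply/setP => -[y|]; rewrite !inE //=.
  by rewrite mem_imset ?inE //; exact: Some_inj.
rewrite cardsU1 card_imset; last exact: Some_inj.
by rewrite (_ : None \notin _) //; apply/imsetP => -[].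
Qed.

Lemma nedges_joinK1 : nedges (joinK1 e) = #|V| + nedges e.
Proof.
have := handshake joinK1_sym joinK1_irr.
rewrite big_option deg_joinK1_None.
under eq_bigr do rewrite deg_joinK1_Some -addn1.
by rewrite big_split /= sum1_card handshake // !cardT; lia.
Qed.

End JoinK1.

Theorem corollary7p4 (V : finType) (e : rel V)
  (e_sym : symmetric e) (e_irr : irreflexive e) :
  eulerian (joinK1 e) ->
  (nedges (joinK1 e) %% 4 = 1 \/ nedges (joinK1 e) %% 4 = 2) ->
  ~ supergraceful e.
Proof.
move=> [_ even_deg] q_mod [phi labeling].
have odd_deg x : odd (deg e x).
  by have := even_deg (Some x); rewrite deg_joinK1_Some /= negbK.
have := even_label_sum e_sym e_irr phi odd_deg.
rewrite (total_labeling_sum e_sym e_irr labeling) odd_bin2.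
by rewrite nedges_joinK1 // in q_mod; rewrite /nverts; lia.
Qed.
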